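(* Let $J\in\mathbb R_{\ge0}^{n\times m}$ (entrywise nonnegative), $h\in\mathbb R^n$, $g\in\mathbb R^m$ be arbitrary otherwise, and let $\rho(a)=\log(e^a+e^{-a})$. Define $f:\{\pm1\}^n\to\mathbb R$ by \[ f(x)=\sum_{j=1}^m\rho\Big(\sum_{i=1}^n x_iJ_{ij}+g_j\Big)+h^Tx, \] and write $f(x)=\sum_{T\subseteq[n]}\hat f_T\prod_{i\in T}x_i$ (its unique multilinear expansion). Then for all distinct $i,j\in[n]$, $\hat f_{\{i,j\}}\ge0$; moreover $\hat f_{\{i,j\}}>0$ whenever there exists $k\in[m]$ with $J_{ik}>0$ and $J_{jk}>0$. *)

From Stdlib Require Import Reals List.
Import ListNotations.
Open Scope R_scope.

Fixpoint sumR (n : nat) (F : nat -> R) : R :=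
  match n with
  | O => 0
  | S k => sumR k F + F k
  end.

Definition sumL {A : Type} (l : list A) (F : A -> R) : R :=
  fold_right (fun a acc => F a + acc) 0 l.

Definition prodL {A : Type} (l : list A) (F : A -> R) : R :=
  fold_right (fun a acc => F a * acc) 1 l.

(* A point of {±1}^n is encoded as a list of n booleans; true = +1, false = -1. *)
Definition sgn (b : bool) : R := if b then 1 else -1.

(* coordinate x_i (0-based index i) *)
Definition xval (x : list bool) (i : nat) : R := sgn (nth i x false).

Fixpoint cube (n : nat) : list (list bool) :=
  match n with
  | O => [ [] ]
  | S k => flat_map (fun x => [true :: x; false :: x]) (cube k)
  end.

Definition rho (a : R) : R := ln (exp a + exp (- a)).

Definition frbm (n m : nat) (J : nat -> nat -> R) (h g : nat -> R)
  (x : list bool) : R :=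
  sumR m (fun k => rho (sumR n (fun i => xval x i * J i k) + g k))
  + sumR n (fun i => h i * xval x i).

(* Fourier (multilinear-expansion) coefficient of F : {±1}^n -> R on the
   set T (given as a duplicate-free list of indices < n):
   hat F_T = 2^{-n} sum_x F(x) prod_{i in T} x_i. *)
Definition fourier (n : nat) (F : list bool -> R) (T : list nat) : R :=
  / (2 ^ n) * sumL (cube n) (fun x => F x * prodL T (fun i => xval x i)).

(* The coefficient of x_i x_j is a quarter of the average, over the cube, of the
   mixed second difference of f in the coordinates i and j.  The linear part h^T x
   has vanishing mixed differences, and the k-th hidden unit contributes
   rho(s+A+B) - rho(s+A) - rho(s+B) + rho(s) with A = 2 J_ik >= 0, B = 2 J_jk >= 0.
   Writing E(t) = e^t + e^-t, this is ln (E(s+A+B) E(s)) - ln (E(s+A) E(s+B)), and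
     E(s+A+B) E(s) - E(s+A) E(s+B) = (e^2A - 1) (e^2B - 1) / e^(A+B),
   which is nonnegative, and positive as soon as A and B are. *)

From Stdlib Require Import Reals List Lra Lia Psatz.
Import ListNotations.
Open Scope R_scope.

Lemma sumL_ext {A : Type} (l : list A) (F G : A -> R) :
  (forall x, F x = G x) -> sumL l F = sumL l G.
Proof.
  intros H; induction l as [|a l IH]; unfold sumL in *; simpl; [reflexivity|].
  rewrite H, IH; reflexivity.
Qed.

Lemma sumL_add {A : Type} (l : list A) (F G : A -> R) :
  sumL l (fun x => F x + G x) = sumL l F + sumL l G.
Proof.
  induction l as [|a l IH]; unfold sumL in *; simpl; [ring|].
  rewrite IH; ring.
Qed.

Lemma sumL_nonneg {A : Type} (l : list A) (F : A -> R) :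
  (forall x, 0 <= F x) -> 0 <= sumL l F.
Proof.
  intros H; induction l as [|a l IH]; unfold sumL in *; simpl; [lra|].
  specialize (H a); lra.
Qed.

Lemma sumL_pos {A : Type} (l : list A) (F : A -> R) :
  l <> [] -> (forall x, 0 < F x) -> 0 < sumL l F.
Proof.
  intros Hl H; destruct l as [|a l]; [congruence|].
  unfold sumL; simpl; fold (sumL l F).
  assert (0 <= sumL l F) by (apply sumL_nonneg; intros x; apply Rlt_le, H).
  specialize (H a); lra.
Qed.

Lemma cube_nonempty n : cube n <> [].
Proof.
  induction n as [|n IH]; simpl; [congruence|].
  destruct (cube n); [congruence|]; simpl; congruence.
Qed.

Lemma sumL_cube_succ n (F : list bool -> R) :
  sumL (cube (S n)) F = sumL (cube n) (fun x => F (true :: x) + F (false :: x)).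
Proof.
  simpl cube; induction (cube n) as [|a l IH]; unfold sumL in *; simpl; [reflexivity|].
  rewrite IH; ring.
Qed.

Lemma sumR_ext n (F G : nat -> R) :
  (forall l, (l < n)%nat -> F l = G l) -> sumR n F = sumR n G.
Proof.
  induction n as [|n IH]; intros H; simpl; [reflexivity|].
  rewrite IH by (intros; apply H; lia).
  rewrite H by lia; reflexivity.
Qed.

Lemma sumR_nonneg n (F : nat -> R) :
  (forall l, (l < n)%nat -> 0 <= F l) -> 0 <= sumR n F.
Proof.
  induction n as [|n IH]; intros H; simpl; [lra|].
  assert (0 <= sumR n F) by (apply IH; intros; apply H; lia).
  assert (0 <= F n) by (apply H; lia).
  lra.
Qed.

Lemma sumR_pos n (F : nat -> R) k :
  (forall l, (l < n)%nat -> 0 <= F l) -> (k < n)%nat -> 0 < F k -> 0 < sumR n F.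
Proof.
  induction n as [|n IH]; intros H Hk Fk; simpl; [lia|].
  assert (0 <= sumR n F) by (apply sumR_nonneg; intros; apply H; lia).
  assert (0 <= F n) by (apply H; lia).
  destruct (Nat.eq_dec k n) as [->|Hkn]; [lra|].
  assert (0 < sumR n F) by (apply IH; [intros l Hl; apply H | | exact Fk]; lia).
  lra.
Qed.

Lemma sumR_update n i (u v : nat -> R) :
  (i < n)%nat -> (forall l, (l < n)%nat -> l <> i -> u l = v l) ->
  sumR n u = sumR n v + (u i - v i).
Proof.
  induction n as [|n IH]; intros Hi H; simpl; [lia|].
  destruct (Nat.eq_dec i n) as [->|Hin].
  - rewrite (sumR_ext n u v) by (intros; apply H; lia); ring.
  - rewrite IH by (lia || (intros; apply H; lia)).
    rewrite (H n) by lia; ring.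
Qed.

Lemma sumR_update2 n i j (u v : nat -> R) :
  (i < n)%nat -> (j < n)%nat -> i <> j ->
  (forall l, (l < n)%nat -> l <> i -> l <> j -> u l = v l) ->
  sumR n u = sumR n v + (u i - v i) + (u j - v j).
Proof.
  intros Hi Hj Hij H.
  set (w := fun l => if Nat.eq_dec l i then v l else u l).
  rewrite (sumR_update n i u w), (sumR_update n j w v); trivial; unfold w.
  - destruct (Nat.eq_dec i i), (Nat.eq_dec j i); [congruence | ring | congruence..].
  - intros l Hl Hlj; destruct (Nat.eq_dec l i); [reflexivity | auto].
  - intros l Hl Hli; destruct (Nat.eq_dec l i); [congruence | reflexivity].
Qed.

Fixpoint set_coord (x : list bool) (i : nat) (b : bool) : list bool :=
  match x, i with
  | [], O => [b]
  | [], S i' => false :: set_coord [] i' b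
  | _ :: x', O => b :: x'
  | a :: x', S i' => a :: set_coord x' i' b
  end.

Lemma nth_set_coord x i b l :
  nth l (set_coord x i b) false = if Nat.eqb l i then b else nth l x false.
Proof.
  revert i l; induction x as [|a x IH]; intros i l.
  - revert l; induction i as [|i IHi]; intros [|l]; simpl; auto.
    + destruct l; reflexivity.
    + rewrite IHi; destruct (Nat.eqb l i); [reflexivity|]; destruct l; reflexivity.
  - destruct i, l; simpl; auto.
Qed.

Lemma xval_set_coord_same x i b : xval (set_coord x i b) i = sgn b.
Proof. unfold xval; rewrite nth_set_coord, Nat.eqb_refl; reflexivity. Qed.

Lemma xval_set_coord_other x i b l : l <> i -> xval (set_coord x i b) l = xval x l.
Proof.
  intros Hl; unfold xval; rewrite nth_set_coord.
  destruct (Nat.eqb_spec l i); [congruence | reflexivity].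
Qed.

Definition mixed_diff (F : list bool -> R) (i j : nat) (x : list bool) : R :=
  F (set_coord (set_coord x j true) i true) - F (set_coord (set_coord x j false) i true)
  - F (set_coord (set_coord x j true) i false) + F (set_coord (set_coord x j false) i false).

Lemma sum_cube_mul_xval n i (F : list bool -> R) : (i < n)%nat ->
  sumL (cube n) (fun x => F x * xval x i) =
  sumL (cube n) (fun x => (F (set_coord x i true) - F (set_coord x i false)) / 2).
Proof.
  revert i F; induction n as [|n IH]; intros i F Hi; [lia|].
  rewrite !sumL_cube_succ.
  destruct i as [|i].
  - apply sumL_ext; intros x; unfold xval; simpl; lra.
  - transitivity (sumL (cube n) (fun x => F (true :: x) * xval x i)
                   + sumL (cube n) (fun x => F (false :: x) * xval x i)).
    { rewrite <- sumL_add; reflexivity. }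
    rewrite (IH i (fun x => F (true :: x))), (IH i (fun x => F (false :: x))) by lia.
    rewrite <- sumL_add; reflexivity.
Qed.

Lemma sum_cube_mul_xval2 n i j (F : list bool -> R) :
  (i < n)%nat -> (j < n)%nat -> i <> j ->
  sumL (cube n) (fun x => F x * prodL [i; j] (fun l => xval x l)) =
  sumL (cube n) (fun x => mixed_diff F i j x / 4).
Proof.
  intros Hi Hj Hij.
  transitivity (sumL (cube n) (fun x => (F x * xval x j) * xval x i)).
  { apply sumL_ext; intros x; unfold prodL; simpl; ring. }
  rewrite (sum_cube_mul_xval n i) by exact Hi.
  transitivity (sumL (cube n)
    (fun x => (F (set_coord x i true) - F (set_coord x i false)) / 2 * xval x j)).
  { apply sumL_ext; intros x; rewrite !xval_set_coord_other by congruence; lra. }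
  rewrite (sum_cube_mul_xval n j) by exact Hj.
  apply sumL_ext; intros x; unfold mixed_diff; lra.
Qed.

Lemma fourier_pair n (F : list bool -> R) i j :
  (i < n)%nat -> (j < n)%nat -> i <> j ->
  fourier n F [i; j] = / 2 ^ n * sumL (cube n) (fun x => mixed_diff F i j x / 4).
Proof. intros; unfold fourier; rewrite sum_cube_mul_xval2; auto. Qed.

Lemma fourier_pair_nonneg n (F : list bool -> R) i j :
  (i < n)%nat -> (j < n)%nat -> i <> j ->
  (forall x, 0 <= mixed_diff F i j x) -> 0 <= fourier n F [i; j].
Proof.
  intros Hi Hj Hij HF; rewrite fourier_pair by assumption.
  pose proof (pow_lt 2 n ltac:(lra)).
  apply Rmult_le_pos; [apply Rlt_le, Rinv_0_lt_compat; lra|].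
  apply sumL_nonneg; intros x; specialize (HF x); lra.
Qed.

Lemma fourier_pair_pos n (F : list bool -> R) i j :
  (i < n)%nat -> (j < n)%nat -> i <> j ->
  (forall x, 0 < mixed_diff F i j x) -> 0 < fourier n F [i; j].
Proof.
  intros Hi Hj Hij HF; rewrite fourier_pair by assumption.
  pose proof (pow_lt 2 n ltac:(lra)).
  apply Rmult_lt_0_compat; [apply Rinv_0_lt_compat; lra|].
  apply sumL_pos; [apply cube_nonempty|]; intros x; specialize (HF x); lra.
Qed.

Lemma mixed_diff_ext (F G : list bool -> R) i j x :
  (forall y, F y = G y) -> mixed_diff F i j x = mixed_diff G i j x.
Proof. intros H; unfold mixed_diff; rewrite !H; reflexivity. Qed.

Lemma mixed_diff_add (F G : list bool -> R) i j x :
  mixed_diff (fun y => F y + G y) i j x = mixed_diff F i j x + mixed_diff G i j x.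
Proof. unfold mixed_diff; ring. Qed.

Lemma mixed_diff_sumR m (F : nat -> list bool -> R) i j x :
  mixed_diff (fun y => sumR m (fun k => F k y)) i j x =
  sumR m (fun k => mixed_diff (F k) i j x).
Proof.
  induction m as [|m IH]; [unfold mixed_diff; simpl; ring|].
  cbn [sumR]; rewrite mixed_diff_add, IH; reflexivity.
Qed.

Definition lin_form (n : nat) (w : nat -> R) (x : list bool) : R :=
  sumR n (fun l => xval x l * w l).

Lemma lin_form_set_coord2 n (w : nat -> R) i j x a b :
  (i < n)%nat -> (j < n)%nat -> i <> j ->
  lin_form n w (set_coord (set_coord x j b) i a) =
  lin_form n w (set_coord (set_coord x j false) i false)
  + (if a then 2 * w i else 0) + (if b then 2 * w j else 0).
Proof.
  intros Hi Hj Hij; unfold lin_form.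
  rewrite (sumR_update2 n i j _ (fun l => xval (set_coord (set_coord x j false) i false) l * w l))
    by (trivial; intros l _ Hli Hlj; rewrite !xval_set_coord_other by assumption; reflexivity).
  rewrite !xval_set_coord_same, !(xval_set_coord_other _ i _ j), !xval_set_coord_same
    by congruence.
  destruct a, b; simpl; ring.
Qed.

Definition second_diff (phi : R -> R) (s A B : R) : R :=
  phi (s + A + B) - phi (s + A) - phi (s + B) + phi s.

Lemma second_diff_shift (phi : R -> R) c s A B :
  second_diff (fun t => phi (t + c)) s A B = second_diff phi (s + c) A B.
Proof.
  unfold second_diff.
  replace (s + A + B + c) with (s + c + A + B) by ring.
  replace (s + A + c) with (s + c + A) by ring.
  replace (s + B + c) with (s + c + B) by ring.
  reflexivity.
Qed.

Lemma mixed_diff_comp_lin_form n (w : nat -> R) (phi : R -> R) i j x :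
  (i < n)%nat -> (j < n)%nat -> i <> j ->
  mixed_diff (fun y => phi (lin_form n w y)) i j x =
  second_diff phi (lin_form n w (set_coord (set_coord x j false) i false)) (2 * w i) (2 * w j).
Proof.
  intros Hi Hj Hij; unfold mixed_diff, second_diff.
  rewrite (lin_form_set_coord2 n w i j x true true), (lin_form_set_coord2 n w i j x true false),
    (lin_form_set_coord2 n w i j x false true) by assumption.
  cbv iota; rewrite !Rplus_0_r; reflexivity.
Qed.

Lemma mixed_diff_lin_form n (w : nat -> R) i j x :
  (i < n)%nat -> (j < n)%nat -> i <> j -> mixed_diff (lin_form n w) i j x = 0.
Proof.
  intros Hi Hj Hij; unfold mixed_diff.
  rewrite (lin_form_set_coord2 n w i j x true true), (lin_form_set_coord2 n w i j x true false),
    (lin_form_set_coord2 n w i j x false true) by assumption.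
  ring.
Qed.

Lemma exp_add_exp_opp_pos t : 0 < exp t + exp (- t).
Proof. pose proof (exp_pos t); pose proof (exp_pos (- t)); lra. Qed.

Lemma cosh_prod_gap s A B :
  (exp (s + A + B) + exp (- (s + A + B))) * (exp s + exp (- s))
  - (exp (s + A) + exp (- (s + A))) * (exp (s + B) + exp (- (s + B)))
  = (exp A * exp A - 1) * (exp B * exp B - 1) / (exp A * exp B).
Proof.
  rewrite !exp_Ropp, !exp_plus.
  pose proof (exp_pos s); pose proof (exp_pos A); pose proof (exp_pos B).
  field; repeat split; lra.
Qed.

Lemma second_diff_rho s A B :
  second_diff rho s A B =
  ln ((exp (s + A + B) + exp (- (s + A + B))) * (exp s + exp (- s)))
  - ln ((exp (s + A) + exp (- (s + A))) * (exp (s + B) + exp (- (s + B)))).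
Proof. unfold second_diff, rho; rewrite !ln_mult by apply exp_add_exp_opp_pos; ring. Qed.

Lemma ln_le_compat x y : 0 < x -> x <= y -> ln x <= ln y.
Proof.
  intros Hx [Hxy | ->]; [apply Rlt_le, ln_increasing; assumption | apply Rle_refl].
Qed.

Lemma second_diff_rho_nonneg s A B : 0 <= A -> 0 <= B -> 0 <= second_diff rho s A B.
Proof.
  intros HA HB; rewrite second_diff_rho.
  pose proof (cosh_prod_gap s A B) as Egap.
  pose proof (exp_ineq1_le A); pose proof (exp_ineq1_le B).
  assert (1 <= exp A * exp A) by nra; assert (1 <= exp B * exp B) by nra.
  assert (0 <= (exp A * exp A - 1) * (exp B * exp B - 1) / (exp A * exp B)).
  { unfold Rdiv; apply Rmult_le_pos; [apply Rmult_le_pos; lra|].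
    apply Rlt_le, Rinv_0_lt_compat, Rmult_lt_0_compat; apply exp_pos. }
  pose proof (Rmult_lt_0_compat _ _ (exp_add_exp_opp_pos (s + A)) (exp_add_exp_opp_pos (s + B)))
    as HQ.
  apply Rge_le, Rge_minus, Rle_ge, ln_le_compat; [exact HQ | lra].
Qed.

Lemma second_diff_rho_pos s A B : 0 < A -> 0 < B -> 0 < second_diff rho s A B.
Proof.
  intros HA HB; rewrite second_diff_rho.
  pose proof (cosh_prod_gap s A B) as Egap.
  pose proof (exp_ineq1_le A); pose proof (exp_ineq1_le B).
  assert (1 < exp A * exp A) by nra; assert (1 < exp B * exp B) by nra.
  assert (0 < (exp A * exp A - 1) * (exp B * exp B - 1) / (exp A * exp B)).
  { unfold Rdiv; apply Rmult_lt_0_compat; [apply Rmult_lt_0_compat; lra|].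
    apply Rinv_0_lt_compat, Rmult_lt_0_compat; apply exp_pos. }
  pose proof (Rmult_lt_0_compat _ _ (exp_add_exp_opp_pos (s + A)) (exp_add_exp_opp_pos (s + B)))
    as HQ.
  apply Rlt_0_minus, ln_increasing; [exact HQ | lra].
Qed.

Lemma mixed_diff_frbm n m (J : nat -> nat -> R) (h g : nat -> R) i j x :
  (i < n)%nat -> (j < n)%nat -> i <> j ->
  mixed_diff (frbm n m J h g) i j x =
  sumR m (fun k => second_diff rho
    (lin_form n (fun l => J l k) (set_coord (set_coord x j false) i false) + g k)
    (2 * J i k) (2 * J j k)).
Proof.
  intros Hi Hj Hij; unfold frbm.
  rewrite mixed_diff_add, mixed_diff_sumR.
  rewrite (mixed_diff_ext _ (lin_form n h))
    by (intros y; apply sumR_ext; intros; apply Rmult_comm).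
  rewrite mixed_diff_lin_form, Rplus_0_r by assumption.
  apply sumR_ext; intros k _.
  rewrite <- second_diff_shift.
  exact (mixed_diff_comp_lin_form n (fun l => J l k) (fun t => rho (t + g k)) i j x Hi Hj Hij).
Qed.

Theorem lemma5p2 (n m : nat) (J : nat -> nat -> R) (h g : nat -> R)
  (HJ : forall a k, (a < n)%nat -> (k < m)%nat -> 0 <= J a k)
  (i j : nat) (Hi : (i < n)%nat) (Hj : (j < n)%nat) (Hij : i <> j) :
  0 <= fourier n (frbm n m J h g) [i; j] /\
  ((exists k, (k < m)%nat /\ 0 < J i k /\ 0 < J j k) ->
     0 < fourier n (frbm n m J h g) [i; j]).
Proof.
  assert (Hunit : forall x k, (k < m)%nat ->
    0 <= second_diff rho
      (lin_form n (fun l => J l k) (set_coord (set_coord x j false) i false) + g k)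
      (2 * J i k) (2 * J j k)).
  { intros x k Hk; apply second_diff_rho_nonneg;
      pose proof (HJ i k Hi Hk); pose proof (HJ j k Hj Hk); lra. }
  split.
  - apply fourier_pair_nonneg; trivial; intros x.
    rewrite mixed_diff_frbm by assumption.
    apply sumR_nonneg; intros k Hk; apply Hunit, Hk.
  - intros (k & Hk & Hik & Hjk).
    apply fourier_pair_pos; trivial; intros x.
    rewrite mixed_diff_frbm by assumption.
    apply (sumR_pos m _ k); [intros; apply Hunit; assumption | exact Hk |].
    apply second_diff_rho_pos; lra.
Qed.
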